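(* Let $G$ be a connected graph with $n\ge 2$ vertices and let $x$ be an $l_\infty$-Fiedler vector of $G$. Then $\|x\|_2^2\ge \dfrac{n}{n-1}$. Moreover, equality holds if and only if $G$ is isomorphic to the complete graph $K_n$.
   Context: For a finite simple undirected graph $G$ with $n$ vertices, let $\mathcal{F}=\{x\in\mathbb{R}^{V(G)} : \sum_{v} x_v = 0,\ \|x\|_\infty = 1\}$, for $x\in\mathcal{F}$ let $\gamma_x(G)=\max_{uv\in E(G)}|x_u-x_v|$, and $\gamma(G)=\min_{x\in\mathcal{F}}\gamma_x(G)$. A vector $x\in\mathcal{F}$ with $\gamma_x(G)=\gamma(G)$ is called an $l_\infty$-Fiedler vector of $G$. $\|x\|_2$ is the Euclidean norm. *)

From mathcomp Require Import all_boot all_order all_algebra.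
From mathcomp Require Import reals.
Set Implicit Arguments. Unset Strict Implicit. Unset Printing Implicit Defensive.
Import Order.TTheory GRing.Theory Num.Theory.
Local Open Scope ring_scope.

Definition simple_graph (V : finType) (e : rel V) : Prop :=
  symmetric e /\ irreflexive e.

Definition connected_graph (V : finType) (e : rel V) : Prop :=
  forall u v : V, connect e u v.

Definition linf_norm (R : realType) (V : finType) (x : V -> R) : R :=
  \big[Num.max/0]_(v : V) `|x v|.

Definition feasible (R : realType) (V : finType) (x : V -> R) : Prop :=
  \sum_(v : V) x v = 0 /\ linf_norm x = 1.

Definition gamma_x (R : realType) (V : finType) (e : rel V) (x : V -> R) : R :=
  \big[Num.max/0]_(p : V * V | e p.1 p.2) `|x p.1 - x p.2|.

Definition linf_fiedler (R : realType) (V : finType) (e : rel V) (x : V -> R) : Prop :=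
  feasible x /\ forall y : V -> R, feasible y -> gamma_x e x <= gamma_x e y.

Definition sqnorm2 (R : realType) (V : finType) (x : V -> R) : R :=
  \sum_(v : V) x v ^+ 2.

Definition complete_rel (n : nat) : rel 'I_n := fun u v => u != v.

Arguments complete_rel n : clear implicits.

Definition graph_iso (V W : finType) (e : rel V) (f' : rel W) : Prop :=
  exists f : V -> W, bijective f /\ forall u v, e u v = f' (f u) (f v).

From mathcomp Require Import all_boot all_order all_algebra.
From mathcomp Require Import reals ring lra.
Import Order.TTheory GRing.Theory Num.Theory.
Set Implicit Arguments.
Unset Strict Implicit.
Local Open Scope ring_scope.

(* Pick v0 with |x v0| = 1 and write n = #|V|.  Since the entries of x sum to
   0, ||x||^2 = n/(n-1) + sum_{w <> v0} (x w + x v0/(n-1))^2, which gives the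
   bound.  Equality makes x the "star" vector (x v0 at v0, -x v0/(n-1)
   elsewhere), whose gamma is n/(n-1) > 1 along any edge at v0, whereas a
   non-edge uv of G yields the feasible vector 1_u - 1_v with gamma <= 1.
   Conversely, in K_n the star vector has gamma n/(n-1); so does any Fiedler
   vector at most, which forces x v0 (x w + x v0/(n-1)) >= 0 for w <> v0, and
   these numbers sum to 0. *)

Section Fiedler.
Variables (R : realType) (V : finType).
Hypothesis V_gt1 : (1 < #|V|)%N.

Local Notation n := (#|V|%:R : R).

Lemma card_sub1_gt0 : 0 < n - 1.
Proof. by rewrite subr_gt0 ltr1n. Qed.

Lemma card_sub1_neq0 : n - 1 != 0.
Proof. exact/lt0r_neq0/card_sub1_gt0. Qed.

Lemma card_div_gt1 : 1 < n / (n - 1).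
Proof. by rewrite ltr_pdivlMr ?card_sub1_gt0 // mul1r gtrBl. Qed.

Lemma sumr_const_neq (v0 : V) (c : R) : \sum_(w | w != v0) c = (n - 1) * c.
Proof.
have -> : #|V| = #|[pred w | w != v0]|.+1.
  by rewrite -[#|[pred w | w != v0]|]/#|predC1 v0| cardC1 prednK // (ltnW V_gt1).
by rewrite sumr_const -natr1 addrK mulr_natl.
Qed.

Lemma sumr_neq_eq_opp (x : V -> R) (v0 : V) :
  \sum_v x v = 0 -> \sum_(w | w != v0) x w = - x v0.
Proof. by rewrite (bigD1 v0) //= => /eqP; rewrite addrC addr_eq0 => /eqP. Qed.

Lemma sqnorm2_decomp (x : V -> R) (v0 : V) : \sum_v x v = 0 ->
  sqnorm2 x = x v0 ^+ 2 * (n / (n - 1))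
              + \sum_(w | w != v0) (x w + x v0 / (n - 1)) ^+ 2.
Proof.
move=> x_sum0.
have -> : \sum_(w | w != v0) (x w + x v0 / (n - 1)) ^+ 2 =
    \sum_(w | w != v0) x w ^+ 2 + 2 * (x v0 / (n - 1)) * \sum_(w | w != v0) x w
    + (n - 1) * (x v0 / (n - 1)) ^+ 2.
  rewrite -(sumr_const_neq v0) mulr_sumr -!big_split /=.
  by apply: eq_bigr => w _; ring.
rewrite sumr_neq_eq_opp // /sqnorm2 (bigD1 v0) //=.
by field; exact: card_sub1_neq0.
Qed.

Lemma linf_norm_attained (x : V -> R) : exists v0, `|x v0| = linf_norm x.
Proof.
have [v _] : exists v : V, v \in V by apply/card_gt0P; exact: ltnW.
rewrite /linf_norm.
have [v0 _ ->] := @eq_bigmax _ _ V 0 v xpredT (fun w => `|x w|) isT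
  (fun w _ => normr_ge0 (x w)).
by exists v0.
Qed.

Lemma linf_norm_eq1 (x : V -> R) (v0 : V) :
  (forall v, `|x v| <= 1) -> `|x v0| = 1 -> linf_norm x = 1.
Proof.
move=> x_le1 x_v0; apply/le_anti/andP; split.
  by apply/bigmax_leP; split.
by rewrite -x_v0; exact: (@le_bigmax _ _ _ 0 (fun v => `|x v|) v0).
Qed.

Lemma gamma_x_ge (e : rel V) (x : V -> R) (a b : V) :
  e a b -> `|x a - x b| <= gamma_x e x.
Proof.
exact: (@le_bigmax_cond _ _ _ 0 (a, b) (fun p => e p.1 p.2)
  (fun p => `|x p.1 - x p.2|)).
Qed.

Lemma gamma_x_le (e : rel V) (x : V -> R) (c : R) : 0 <= c ->
  (forall a b, e a b -> `|x a - x b| <= c) -> gamma_x e x <= c.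
Proof. by move=> c_ge0 x_le; apply/bigmax_leP; split=> // -[a b] /x_le. Qed.

Definition star (s : R) (v0 : V) : V -> R :=
  fun w => if w == v0 then s else - (s / (n - 1)).

Lemma star_feasible (s : R) (v0 : V) : `|s| = 1 -> feasible (star s v0).
Proof.
move=> s1; split.
  rewrite (bigD1 v0) //= /star eqxx.
  rewrite (eq_bigr (fun _ => - (s / (n - 1)))) => [|w /negPf -> //].
  by rewrite sumr_const_neq; field; exact: card_sub1_neq0.
apply: (@linf_norm_eq1 _ v0) => [w|]; last by rewrite /star eqxx.
rewrite /star; case: (w == v0); first by rewrite s1.
rewrite normrN normrM s1 mul1r ger0_norm; last by rewrite invr_ge0 ltW ?card_sub1_gt0.
rewrite invf_le1 ?card_sub1_gt0 //.
have : 2%:R <= n by rewrite ler_nat.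
lra.
Qed.

Lemma star_center_dist (s : R) : `|s| = 1 -> `|s + s / (n - 1)| = n / (n - 1).
Proof.
move=> s1.
have -> : s + s / (n - 1) = s * (n / (n - 1)).
  by field; exact: card_sub1_neq0.
by rewrite normrM s1 mul1r ger0_norm // (le_trans ler01 (ltW card_div_gt1)).
Qed.

Lemma gamma_star_le (e : rel V) (s : R) (v0 : V) :
  `|s| = 1 -> gamma_x e (star s v0) <= n / (n - 1).
Proof.
move=> s1; have n_ge0 : 0 <= n / (n - 1) := le_trans ler01 (ltW card_div_gt1).
apply: gamma_x_le => // a b _.
rewrite /star; case: (a == v0); case: (b == v0); rewrite ?subrr ?normr0 //.
- by rewrite opprK star_center_dist.
- by rewrite -opprD normrN addrC star_center_dist.
Qed.

Lemma nonedge_feasible (e : rel V) (u v : V) : symmetric e -> u != v -> ~~ e u v ->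
  exists z : V -> R, feasible z /\ gamma_x e z <= 1.
Proof.
move=> e_sym uv euv.
pose z w : R := (w == u)%:R - (w == v)%:R.
have z_in w : [\/ z w = 1, z w = 0 | z w = -1].
  rewrite /z; case: (w =P u) => [->|_]; first by rewrite (negPf uv) subr0; constructor.
  by case: (w == v); [rewrite sub0r; constructor 3 | rewrite subrr; constructor 2].
exists z; split; first split.
- rewrite /z sumrB (bigD1 u) //= big1 => [|w /negPf -> //].
  by rewrite (bigD1 v) //= big1 => [|w /negPf -> //]; rewrite !eqxx subrr.
- apply: (@linf_norm_eq1 _ u) => [w|]; last by rewrite /z eqxx (negPf uv) subr0 normr1.
  by case: (z_in w) => ->; rewrite ?normrN ?normr1 ?normr0.
- apply: gamma_x_le => // a b eab.
  have z1 w : z w = 1 -> w = u.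
    by rewrite /z; case: (w =P u) => // _; case: (w == v) => /= h; exfalso; lra.
  have zN1 w : z w = -1 -> w = v.
    by rewrite /z; case: (w =P v) => // _; case: (w == u) => /= h; exfalso; lra.
  case: (z_in a) => za; case: (z_in b) => zb; rewrite za zb ler_norml; try lra.
  + by move: euv; rewrite -(z1 _ za) -(zN1 _ zb) eab.
  + by move: euv; rewrite e_sym -(zN1 _ za) -(z1 _ zb) eab.
Qed.

Lemma exists_neighbor (e : rel V) (v0 : V) : connected_graph e -> exists w, e v0 w.
Proof.
move=> e_conn.
have : (0 < #|predC1 v0|)%N by rewrite cardC1 -ltnS prednK // ltnW.
case/card_gt0P => w; rewrite inE => wv0.
case/connectP: (e_conn v0 w) => -[|a p] /=; first by move=> _ /eqP; rewrite (negPf wv0).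
by case/andP => e_v0a _ _; exists a.
Qed.

Lemma graph_iso_completeP (e : rel V) :
  graph_iso e (complete_rel #|V|) <-> forall u v, e u v = (u != v).
Proof.
split=> [[f [f_bij f_iso]] u v | e_complete].
  by rewrite f_iso /complete_rel (inj_eq (bij_inj f_bij)).
exists enum_rank; split; first exact: (Bijective (@enum_rankK V) (@enum_valK V)).
by move=> u v; rewrite e_complete /complete_rel (inj_eq (@enum_rank_inj V)).
Qed.

Lemma complete_of_fiedler_gamma_gt1 (e : rel V) (x : V -> R) :
  simple_graph e -> linf_fiedler e x -> 1 < gamma_x e x ->
  forall u v, e u v = (u != v).
Proof.
move=> [e_sym e_irr] [_ x_min] gamma_gt1 u v.
have [<-|uv] := eqVneq u v; first exact: e_irr.
apply/idPn => euv; have [z [z_feas gamma_z]] := nonedge_feasible e_sym uv euv.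
by have := x_min z z_feas; lra.
Qed.

Lemma gamma_x_gt1 (e : rel V) (x : V -> R) (v0 : V) :
  connected_graph e -> irreflexive e -> `|x v0| = 1 ->
  (forall w, w != v0 -> x w = - (x v0 / (n - 1))) -> 1 < gamma_x e x.
Proof.
move=> e_conn e_irr x_v0 x_star.
have [w e_v0w] := exists_neighbor v0 e_conn.
have wv0 : w != v0 by apply: contraTneq e_v0w => ->; rewrite e_irr.
apply: (lt_le_trans card_div_gt1).
by rewrite -(star_center_dist x_v0) -[x v0 / _]opprK -(x_star w wv0) gamma_x_ge.
Qed.

Lemma deviation_eq0_of_dominating (e : rel V) (x : V -> R) (v0 : V) :
  (forall w, w != v0 -> e v0 w) -> \sum_v x v = 0 -> `|x v0| = 1 ->
  gamma_x e x <= n / (n - 1) ->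
  \sum_(w | w != v0) (x w + x v0 / (n - 1)) ^+ 2 = 0.
Proof.
move=> v0_dominating x_sum0 x_v0 gamma_le.
have x_v0_sq : x v0 * x v0 = 1 by rewrite -expr2 -real_normK ?num_real // x_v0 expr1n.
set d := fun w => x v0 * (x w + x v0 / (n - 1)).
have d_ge0 w : w != v0 -> 0 <= d w.
  move=> wv0; have dist_le : `|x v0 - x w| <= n / (n - 1).
    exact: le_trans (gamma_x_ge x (v0_dominating w wv0)) gamma_le.
  have proj_le : x v0 * (x v0 - x w) <= `|x v0 - x w|.
    by rewrite -[leRHS]mul1r -x_v0 -normrM ler_norm.
  have n_split : n / (n - 1) = 1 + 1 / (n - 1) by field; exact: card_sub1_neq0.
  rewrite n_split in dist_le; rewrite mulrBr x_v0_sq in proj_le.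
  rewrite /d mulrDr mulrA x_v0_sq; lra.
have d_sum0 : \sum_(w | w != v0) d w = 0.
  rewrite -mulr_sumr big_split /= sumr_neq_eq_opp // sumr_const_neq.
  have -> : (n - 1) * (x v0 / (n - 1)) = x v0 by field; exact: card_sub1_neq0.
  by rewrite addNr mulr0.
apply: big1 => w wv0.
move/eqP: (psumr_eq0P d_ge0 d_sum0 wv0); rewrite mulf_eq0.
have -> : (x v0 == 0) = false by apply/negbTE; rewrite -normr_eq0 x_v0 oner_neq0.
by move=> /eqP ->; rewrite expr0n.
Qed.

End Fiedler.

Theorem lemma4p4 (R : realType) (V : finType) (e : rel V) (x : V -> R) :
  simple_graph e -> connected_graph e -> (2 <= #|V|)%N ->
  linf_fiedler e x ->
  (#|V|%:R / (#|V|%:R - 1) <= sqnorm2 x) /\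
  (sqnorm2 x = #|V|%:R / (#|V|%:R - 1) <-> graph_iso e (complete_rel #|V|)).
Proof.
move=> e_simple e_conn V_gt1 x_fiedler; have [[x_sum0 x_linf] x_min] := x_fiedler.
have [v0] := linf_norm_attained V_gt1 x; rewrite x_linf => x_v0.
have x_v0_sq : x v0 ^+ 2 = 1 by rewrite -real_normK ?num_real // x_v0 expr1n.
rewrite (sqnorm2_decomp V_gt1 v0 x_sum0) x_v0_sq mul1r.
set dev := \sum_(w | _) _.
have dev_ge0 : 0 <= dev by apply: sumr_ge0 => w _; exact: sqr_ge0.
split; first by rewrite lerDl.
rewrite graph_iso_completeP -[X in _ = X]addr0; split => [/addrI dev0 | e_complete].
- have x_star w : w != v0 -> x w = - (x v0 / (#|V|%:R - 1)).
    move=> wv0; apply/eqP; rewrite -addr_eq0 -sqrf_eq0; apply/eqP.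
    exact: (psumr_eq0P (fun w _ => sqr_ge0 _) dev0).
  apply: (complete_of_fiedler_gamma_gt1 e_simple x_fiedler).
  exact: (gamma_x_gt1 V_gt1 e_conn e_simple.2 x_v0 x_star).
- congr (_ + _); apply: (deviation_eq0_of_dominating V_gt1 (e:=e)) => //.
    by move=> w wv0; rewrite e_complete eq_sym.
  apply: le_trans (x_min _ (star_feasible V_gt1 v0 x_v0)) _.
  exact: gamma_star_le.
Qed.
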